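(* Let $\langle A,\preccurlyeq\rangle$ be a pre-ordered set, and consider the condition ( * ) for every $a\in A$ there is $b\in A$ with $b\prec a$. (i) If $\preccurlyeq$ satisfies ( * ), then $LO(A,\preccurlyeq)$ contains no minimal sets; consequently every $pr(a)$, $a\in A$, is infinite, and every set in $LO(A,\preccurlyeq)$ is infinite. (ii) Conversely, if ( * ) fails, then $LO(A,\preccurlyeq)$ contains a minimal set.
   Context: A pre-ordering $\preccurlyeq$ on $A$ is a reflexive and transitive binary relation; $b\prec a$ means $b\preccurlyeq a$ and not $a\preccurlyeq b$. For $a\in A$, $pr(a)=\{b\in A: b\preccurlyeq a\}$. $LO(A,\preccurlyeq)$ is the set of all nonempty subsets $x\subseteq A$ such that $pr(c)\subseteq x$ for every $c\in x$. A set $x\in LO(A,\preccurlyeq)$ is minimal if there is no $y\in LO(A,\preccurlyeq)$ with $y\subsetneq x$. *)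

From mathcomp Require Import all_boot.
From mathcomp Require Import boolp classical_sets cardinality.
Set Implicit Arguments. Unset Strict Implicit. Unset Printing Implicit Defensive.
Local Open Scope classical_set_scope.

Section PreOrder.
Variables (A : Type) (le : A -> A -> Prop).

Definition is_preorder : Prop :=
  (forall a, le a a) /\ (forall a b c, le a b -> le b c -> le a c).

Definition slt (b a : A) : Prop := le b a /\ ~ le a b.

Definition pr (a : A) : set A := [set b | le b a].

Definition LO (x : set A) : Prop :=
  x !=set0 /\ (forall c, x c -> pr c `<=` x).

Definition LO_minimal (x : set A) : Prop :=
  LO x /\ ~ (exists y, LO y /\ y `<` x).

End PreOrder.

(** Under the descent condition, a member [x] of [LO] containing [a] contains
    [pr b] for every [b] strictly below [a], while [pr b] misses [a]; so [x] is
    not minimal. Iterating a choice of strict predecessors from a point of [x]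
    gives a strictly descending, hence injective, sequence in [x]. If the
    condition fails at [a], everything below [a] is also above it, so a member
    of [LO] inside [pr a] contains [a] and therefore all of [pr a]. *)

From mathcomp Require Import all_boot.
From mathcomp Require Import boolp classical_sets functions cardinality.
Set Implicit Arguments. Unset Strict Implicit. Unset Printing Implicit Defensive.
Local Open Scope classical_set_scope.

Lemma infinite_set_inj_nat (T : Type) (x : set T) (g : nat -> T) :
  (forall n, x (g n)) -> injective g -> infinite_set x.
Proof.
move=> gx ginj; apply/infiniteP.
have [f] : $|{injfun [set: nat] >-> x}|.
  by apply/injfunPex; exists g => [n _|m n _ _ /ginj].
exact: inj_card_le.
Qed.

Section PreorderLO.
Variables (A : Type) (le : A -> A -> Prop).
Hypothesis le_refl : forall a, le a a.
Hypothesis le_trans : forall a b c, le a b -> le b c -> le a c.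

Lemma LO_pr (a : A) : LO le (pr le a).
Proof.
split; first by exists a; apply: le_refl.
by move=> c hc b hb; apply: le_trans hb hc.
Qed.

Lemma LO_pr_sub (x : set A) (c : A) : LO le x -> x c -> pr le c `<=` x.
Proof. by move=> [_ xcl] /xcl. Qed.

Lemma pr_proper_sub (x : set A) (a b : A) :
  LO le x -> x a -> slt le b a -> pr le b `<` x.
Proof.
move=> LOx xa [ba nab]; split.
  by move=> d db; apply: (LO_pr_sub LOx xa); apply: le_trans db ba.
by move=> /(_ a xa).
Qed.

Lemma descending_le (g : nat -> A) :
  (forall n, slt le (g n.+1) (g n)) -> forall m n, m <= n -> le (g n) (g m).
Proof.
move=> gdesc m; elim=> [|n IHn]; first by rewrite leqn0 => /eqP->; apply: le_refl.
rewrite leq_eqVlt => /orP[/eqP->|/IHn]; first exact: le_refl.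
exact/le_trans/(gdesc n).1.
Qed.

Lemma descending_inj (g : nat -> A) :
  (forall n, slt le (g n.+1) (g n)) -> injective g.
Proof.
move=> gdesc.
suff gneq m n : m < n -> g m <> g n.
  move=> m n gmn; case: (ltngtP m n) => // [/gneq mn | /gneq nm].
  - by case: (mn gmn).
  - by case: (nm (esym gmn)).
move=> lt_mn gmn; apply: (gdesc m).2.
by rewrite gmn; apply: descending_le.
Qed.

Section NoMinimalElement.
Hypothesis strict_pred : forall a, exists b, slt le b a.

Lemma not_LO_minimal (x : set A) : ~ LO_minimal le x.
Proof.
move=> [LOx nomin]; have [[a xa] _] := LOx; apply: nomin.
have [b ba] := strict_pred a.
by exists (pr le b); split; [apply: LO_pr | apply: pr_proper_sub LOx xa ba].
Qed.

Lemma LO_infinite (x : set A) : LO le x -> infinite_set x.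
Proof.
move=> LOx; have [[a xa] _] := LOx.
have [f fslt] := choice strict_pred.
pose g n := iter n f a.
have gdesc n : slt le (g n.+1) (g n) by apply: fslt.
apply: (infinite_set_inj_nat _ (descending_inj gdesc)).
elim=> [//|n IHn]; exact: (LO_pr_sub LOx IHn) (gdesc n).1.
Qed.

End NoMinimalElement.

Lemma LO_minimal_pr (a : A) :
  (forall b, le b a -> le a b) -> LO_minimal le (pr le a).
Proof.
move=> amin; split; first exact: LO_pr.
move=> [y [[[d yd] ycl] [ya nay]]]; apply: nay => e ea.
exact: ycl d yd e (le_trans ea (amin d (ya d yd))).
Qed.

End PreorderLO.

Lemma exists_no_strict_pred (A : Type) (le : A -> A -> Prop) :
  ~ (forall a, exists b, slt le b a) ->
  exists a, forall b, le b a -> le a b.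
Proof.
move=> /existsNP[a /forallNP noslt]; exists a => b ba.
by apply: contra_notP (noslt b) => nab.
Qed.

Theorem proposition2p4 (A : Type) (le : A -> A -> Prop) :
  is_preorder le ->
  ((forall a, exists b, slt le b a) ->
     (forall x : set A, ~ LO_minimal le x) /\
     (forall a : A, infinite_set (pr le a)) /\
     (forall x : set A, LO le x -> infinite_set x)) /\
  (~ (forall a, exists b, slt le b a) -> exists x : set A, LO_minimal le x).
Proof.
move=> [le_refl le_trans]; split.
  move=> strict_pred; split; first exact: not_LO_minimal.
  split=> [a|]; last exact: LO_infinite.
  exact/(LO_infinite le_refl le_trans strict_pred)/LO_pr.
move=> /exists_no_strict_pred[a amin].
by exists (pr le a); apply: LO_minimal_pr.
Qed.
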